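(* For every $m\in\mathbb{N}_0$ and every real $t$ with $|t|<1$, \[ \frac{(\arcsin t)^{m}}{\sqrt{1-t^2}}=t^m\left[1+\sum_{k=1}^{\infty}(-1)^k\frac{Q(m+1,2k;2)}{\binom{m+2k}{m}}\frac{(2t)^{2k}}{(2k)!}\right]. \]
   Context: $s(n,k)$ ($n\ge k\ge 0$) denotes the signed Stirling numbers of the first kind, defined by $\frac{[\ln(1+x)]^k}{k!}=\sum_{n=k}^\infty s(n,k)\frac{x^n}{n!}$ for $|x|<1$; equivalently $\prod_{j=0}^{n-1}(z-j)=\sum_{k=0}^n s(n,k)z^k$. For $m\in\mathbb{N}$, $k\in\mathbb{N}_0$ and $\alpha\in\mathbb{R}$ define \[ Q(m,k;\alpha)=\sum_{\ell=0}^{k}\binom{m+\ell-1}{m-1}\, s(m+k-1,m+\ell-1)\left(\frac{m+k-\alpha}{2}\right)^{\ell}, \] with the convention $0^0=1$. *)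

From Stdlib Require Import Reals ZArith Lia Lra.
From Coquelicot Require Import Coquelicot.
Open Scope R_scope.

(* Signed Stirling numbers of the first kind s(n,k), via the standard
   recurrence coming from prod_{j<n+1}(z-j) = (z-n) prod_{j<n}(z-j):
   s(0,0)=1, s(0,k+1)=0, s(n+1,0)=0, s(n+1,k+1) = s(n,k) - n s(n,k+1). *)
Fixpoint stirling1 (n k : nat) : Z :=
  match n, k with
  | O, O => 1%Z
  | O, S _ => 0%Z
  | S _, O => 0%Z
  | S n', S k' => (stirling1 n' k' - Z.of_nat n' * stirling1 n' (S k'))%Z
  end.

(* Q(m,k;alpha) = sum_{l=0}^k C(m+l-1,m-1) s(m+k-1,m+l-1) ((m+k-alpha)/2)^l,
   with 0^0 = 1 (Stdlib pow satisfies x^0 = 1). Intended for m >= 1. *)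
Definition Qf (m k : nat) (alpha : R) : R :=
  sum_f_R0 (fun l => Binomial.C (m + l - 1)%nat (m - 1)%nat
                     * IZR (stirling1 (m + k - 1)%nat (m + l - 1)%nat)
                     * ((INR (m + k)%nat - alpha) / 2) ^ l) k.

Definition cor_term (m : nat) (t : R) (k : nat) : R :=
  (-1) ^ k * (Qf (m + 1)%nat (2 * k)%nat 2 / Binomial.C (m + 2 * k)%nat m)
  * ((2 * t) ^ (2 * k)%nat / INR (fact (2 * k)%nat)).

From Stdlib Require Import Reals Factorial Lia Lra.
From Coquelicot Require Import Coquelicot.
Open Scope R_scope.

(* With x = t^2 the bracketed series is aser m x = sum_k acoef m k x^k, where
   acoef m k = (-4)^k m!/(m+2k)! [z^m] (z + y)(z + y - 1)...(z + y - m - 2k + 1)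
   and y = (m + 2k - 1)/2; expanding this shifted falling factorial with
   Stirling numbers and the binomial theorem gives Q(m+1,2k;2)
   (stirling_expansion, cor_term_as_acoef).  Peeling two factors off the
   falling factorial yields a recurrence in k (acoef_rec_low, acoef_rec_high),
   which bounds |acoef m k| <= m! (so aser m converges on (-1,1)) and, read
   coefficientwise, gives differential equations for aser m (aser_0_ode,
   euler_form_one, euler_form_high, iser_primitive).  By strong induction on m,
   sqrt(1 - t^2) t^m aser m (t^2) and (asin t)^m then agree at 0 and have the
   same derivative on (-1,1) (asin_pow_expansion_holds), and the theorem
   follows by splitting off the constant term 1 of aser m. *)

(* Coefficients of z * p(z), given the coefficient sequence c of p; used both
   for polynomials in z and for power series in x. *)
Definition xshift (c : nat -> R) (m : nat) : R :=
  match m with O => 0 | S m' => c m' end.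

(* ffcoef N y m is the coefficient of z^m in the shifted falling factorial
   (z + y)(z + y - 1)...(z + y - N + 1). *)
Fixpoint ffcoef (N : nat) (y : R) : nat -> R :=
  match N with
  | O => fun m => match m with O => 1 | S _ => 0 end
  | S N' => fun m => xshift (ffcoef N' y) m + (y - INR N') * ffcoef N' y m
  end.

Lemma ffcoef_S N y m :
  ffcoef (S N) y m = xshift (ffcoef N y) m + (y - INR N) * ffcoef N y m.
Proof. reflexivity. Qed.

Lemma ffcoef_vanish N y m : (N < m)%nat -> ffcoef N y m = 0.
Proof.
  revert m; induction N as [|N IH]; intros [|m] Hm; try lia; [reflexivity|].
  rewrite ffcoef_S; cbn [xshift]. rewrite !IH by lia. ring.
Qed.

Lemma ffcoef_top N y : ffcoef N y N = 1.
Proof.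
  induction N as [|N IH]; [reflexivity|].
  rewrite ffcoef_S; cbn [xshift]. rewrite IH, ffcoef_vanish by lia. ring.
Qed.

Lemma ffcoef_S_first N : forall y m,
  ffcoef (S N) y m = xshift (ffcoef N (y - 1)) m + y * ffcoef N (y - 1) m.
Proof.
  induction N as [|N IH]; intros y m.
  - destruct m as [|[|m]]; simpl; ring.
  - rewrite ffcoef_S, (IH y m), (ffcoef_S N (y - 1) m), S_INR.
    destruct m as [|m]; cbn [xshift]; [ring|].
    rewrite (IH y m), (ffcoef_S N (y - 1) m).
    destruct m; cbn [xshift]; ring.
Qed.

(* Two factors peeled off at once, the step by which the coefficients of the
   series advance. *)
Lemma ffcoef_SS N y m :
  ffcoef (S (S N)) y m =
  xshift (xshift (ffcoef N (y - 1))) m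
  + (y - 1 - INR N) * y * ffcoef N (y - 1) m
  + (y - 1 - INR N + y) * xshift (ffcoef N (y - 1)) m.
Proof.
  rewrite ffcoef_S_first, ffcoef_S.
  destruct m as [|m]; cbn [xshift]; [ring|].
  rewrite ffcoef_S. destruct m; cbn [xshift]; ring.
Qed.

Lemma stirling1_vanish N j : (N < j)%nat -> stirling1 N j = 0%Z.
Proof.
  revert j; induction N as [|N IH]; intros [|j] Hj; try lia; [reflexivity|].
  simpl. rewrite !IH by lia. lia.
Qed.

Lemma stirling1_SS N j :
  stirling1 (S N) (S j) = (stirling1 N j - Z.of_nat N * stirling1 N (S j))%Z.
Proof. reflexivity. Qed.

Lemma sum_const_mult c (f : nat -> R) K :
  sum_f_R0 (fun i => c * f i) K = c * sum_f_R0 f K.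
Proof. rewrite scal_sum. apply sum_eq. intros; ring. Qed.

Lemma sum_xshift (a : nat -> R) K :
  sum_f_R0 (xshift a) K = sum_f_R0 a K - a K.
Proof.
  induction K as [|K IH]; [simpl; ring|].
  rewrite tech5, IH, tech5. cbn [xshift]. ring.
Qed.

Lemma sum_pascal m (a : nat -> R) K :
  sum_f_R0 (fun l => Binomial.C (S m + l) (S m) * a l) K =
  sum_f_R0 (fun l => Binomial.C (m + l) m * a l) (S K)
  + sum_f_R0 (fun l => Binomial.C (S m + l) (S m) * a (S l)) K
  - Binomial.C (S (S m) + K) (S m) * a (S K).
Proof.
  induction K as [|K IH].
  - simpl sum_f_R0. rewrite !Nat.add_0_r, !C_n_n.
    replace (m + 1)%nat with (S m) by lia.
    pose proof (pascal (S m) m ltac:(lia)) as Hp. rewrite C_n_n in Hp.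
    rewrite <- Hp. ring.
  - rewrite tech5, IH, !tech5.
    pose proof (pascal (m + S (S K)) m ltac:(lia)) as Hp.
    replace (S m + S K)%nat with (m + S (S K))%nat by lia.
    replace (S (S m) + S K)%nat with (S (m + S (S K))) by lia.
    replace (S (S m) + K)%nat with (m + S (S K))%nat by lia.
    rewrite <- Hp. ring.
Qed.

(* The coefficient of z^m in sum_j s(N, j) (z + y)^j, truncated after the
   power y^K. *)
Definition stirling_sum (N : nat) (y : R) (m K : nat) : R :=
  sum_f_R0 (fun l => Binomial.C (m + l) m * IZR (stirling1 N (m + l)) * y ^ l) K.

Lemma stirling_sum_S_0 N y K : (S N <= K)%nat ->
  stirling_sum (S N) y 0 K = (y - INR N) * stirling_sum N y 0 K.
Proof.
  intros HK. unfold stirling_sum.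
  rewrite sum_eq with (Bn := fun l =>
    xshift (fun j => IZR (stirling1 N j) * y ^ S j) l
    - INR N * (Binomial.C (0 + l) 0 * IZR (stirling1 N (0 + l)) * y ^ l)).
  2:{ intros [|l] _; rewrite !Nat.add_0_l, C_n_0; cbn [xshift].
      - destruct N; simpl; ring.
      - rewrite stirling1_SS, minus_IZR, mult_IZR, <- INR_IZR_INZ. ring. }
  rewrite minus_sum, sum_xshift, sum_const_mult, (stirling1_vanish N K) by lia.
  rewrite (sum_eq _ (fun l => y * (Binomial.C (0 + l) 0 * IZR (stirling1 N (0 + l)) * y ^ l))).
  2:{ intros l _. rewrite Nat.add_0_l, C_n_0. simpl. ring. }
  rewrite sum_const_mult. ring.
Qed.

Lemma stirling_sum_S_S N y m K : (S N <= S m + K)%nat ->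
  stirling_sum (S N) y (S m) K =
  stirling_sum N y m (S K) + (y - INR N) * stirling_sum N y (S m) K.
Proof.
  intros HK. unfold stirling_sum.
  rewrite sum_eq with (Bn := fun l =>
    Binomial.C (S m + l) (S m) * (IZR (stirling1 N (m + l)) * y ^ l)
    - INR N * (Binomial.C (S m + l) (S m) * IZR (stirling1 N (S m + l)) * y ^ l)).
  2:{ intros l _. replace (S m + l)%nat with (S (m + l)) by lia.
      rewrite stirling1_SS, minus_IZR, mult_IZR, <- INR_IZR_INZ. ring. }
  rewrite minus_sum, sum_const_mult, sum_pascal, (stirling1_vanish N (m + S K)) by lia.
  rewrite (sum_eq (fun l => _ * (IZR (stirling1 N (m + S l)) * y ^ S l))
             (fun l => y * (Binomial.C (S m + l) (S m) * IZR (stirling1 N (S m + l)) * y ^ l))).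
  2:{ intros l _. replace (m + S l)%nat with (S m + l)%nat by lia. simpl pow. ring. }
  rewrite sum_const_mult.
  rewrite (sum_eq (fun l => Binomial.C (m + l) m * (IZR (stirling1 N (m + l)) * y ^ l))
             (fun l => Binomial.C (m + l) m * IZR (stirling1 N (m + l)) * y ^ l))
    by (intros l _; ring).
  ring.
Qed.

(* Expanding (z + y)_N = sum_j s(N, j) (z + y)^j by the binomial theorem. *)
Lemma stirling_expansion N : forall y m K, (N <= m + K)%nat ->
  stirling_sum N y m K = ffcoef N y m.
Proof.
  induction N as [|N IH]; intros y m K HK.
  - unfold stirling_sum. destruct m as [|m].
    + destruct K as [|K]; [simpl; rewrite C_n_n; ring|].
      rewrite decomp_sum by lia. simpl pred.
      rewrite sum_eq with (Bn := fun _ => 0) by (intros l _; simpl; ring).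
      rewrite sum_cte. simpl. rewrite C_n_n. ring.
    + rewrite sum_eq with (Bn := fun _ => 0).
      * rewrite sum_cte. simpl. ring.
      * intros l _. replace (S m + l)%nat with (S (m + l)) by lia. simpl. ring.
  - rewrite ffcoef_S. destruct m as [|m]; cbn [xshift].
    + rewrite stirling_sum_S_0, IH by lia. ring.
    + rewrite stirling_sum_S_S, !IH by lia. ring.
Qed.

Definition acoef (m k : nat) : R :=
  (-4) ^ k * INR (fact m) / INR (fact (m + 2 * k))
  * ffcoef (m + 2 * k) ((INR (m + 2 * k) - 1) / 2) m.

Lemma Qf_as_ffcoef m k :
  Qf (m + 1) (2 * k) 2 = ffcoef (m + 2 * k) ((INR (m + 2 * k) - 1) / 2) m.
Proof.
  rewrite <- (stirling_expansion (m + 2 * k) _ m (2 * k)) by lia.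
  unfold Qf, stirling_sum. apply sum_eq. intros l _.
  replace (m + 1 + l - 1)%nat with (m + l)%nat by lia.
  replace (m + 1 - 1)%nat with m by lia.
  replace (m + 1 + 2 * k - 1)%nat with (m + 2 * k)%nat by lia.
  replace (m + 1 + 2 * k)%nat with (S (m + 2 * k)) by lia.
  rewrite S_INR. replace (INR (m + 2 * k) + 1 - 2) with (INR (m + 2 * k) - 1) by ring.
  reflexivity.
Qed.

Lemma cor_term_as_acoef m t k : cor_term m t k = acoef m k * (t ^ 2) ^ k.
Proof.
  unfold cor_term, acoef. rewrite Qf_as_ffcoef. unfold Binomial.C.
  replace (m + 2 * k - m)%nat with (2 * k)%nat by lia.
  rewrite !pow_mult, !Rpow_mult_distr.
  replace ((-4) ^ k) with ((-1) ^ k * (2 ^ 2) ^ k)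
    by (rewrite <- Rpow_mult_distr; f_equal; ring).
  pose proof (INR_fact_neq_0 m). pose proof (INR_fact_neq_0 (m + 2 * k)).
  pose proof (INR_fact_neq_0 (2 * k)).
  field. auto.
Qed.

Lemma acoef_0 m : acoef m 0 = 1.
Proof.
  unfold acoef. replace (m + 2 * 0)%nat with m by lia. rewrite ffcoef_top.
  pose proof (INR_fact_neq_0 m). simpl pow. field. auto.
Qed.

Lemma acoef_rec m k :
  INR (m + 2 * k + 2) * acoef m (S k) =
  INR (m + 2 * k + 1) * acoef m k
  + (-4) ^ (S k) * INR (fact m) / INR (fact (m + 2 * k + 1))
    * xshift (xshift (ffcoef (m + 2 * k) ((INR (m + 2 * k) - 1) / 2))) m.
Proof.
  unfold acoef.
  replace (m + 2 * S k)%nat with (S (S (m + 2 * k))) by lia.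
  rewrite ffcoef_SS.
  set (N := (m + 2 * k)%nat).
  replace (N + 2)%nat with (S (S N)) by lia.
  replace (N + 1)%nat with (S N) by lia.
  replace ((INR (S (S N)) - 1) / 2 - 1) with ((INR N - 1) / 2)
    by (rewrite !S_INR; field).
  change (fact (S (S N))) with (S (S N) * (S N * fact N))%nat.
  change (fact (S N)) with (S N * fact N)%nat.
  rewrite !mult_INR, !S_INR.
  pose proof (INR_fact_neq_0 m). pose proof (INR_fact_neq_0 N). pose proof (pos_INR N).
  simpl pow. field. repeat split; auto; lra.
Qed.

Lemma acoef_rec_low m k : (m <= 1)%nat ->
  INR (m + 2 * k + 2) * acoef m (S k) = INR (m + 2 * k + 1) * acoef m k.
Proof.
  intros Hm. rewrite acoef_rec. destruct m as [|[|m]]; [| |lia]; cbn [xshift]; ring.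
Qed.

Lemma acoef_rec_high m k :
  INR (m + 2 + 2 * k + 2) * acoef (m + 2) (S k) =
  INR (m + 2 + 2 * k + 1) * acoef (m + 2) k
  + INR ((m + 2) * (m + 1)) / INR (m + 2 + 2 * k + 1) * acoef m (S k).
Proof.
  rewrite acoef_rec. replace (m + 2)%nat with (S (S m)) by lia. cbn [xshift].
  unfold acoef at 3.
  replace (m + 2 * S k)%nat with (S (S m) + 2 * k)%nat by lia.
  change (fact (S (S m))) with (S (S m) * (S m * fact m))%nat.
  replace (S (S m) + 2 * k + 1)%nat with (S (S (S m) + 2 * k)) by lia.
  change (fact (S (S (S m) + 2 * k)))
    with (S (S (S m) + 2 * k) * fact (S (S m) + 2 * k))%nat.
  rewrite !mult_INR.
  pose proof (INR_fact_neq_0 m). pose proof (INR_fact_neq_0 (S (S m) + 2 * k)).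
  pose proof (pos_INR (S (S m) + 2 * k)).
  rewrite !S_INR in *. replace (m + 1)%nat with (S m) by lia. rewrite S_INR.
  field. lra.
Qed.

(* If (b + 1) w = b u + v / b with b >= 1, then |w| is at most a weighted
   mean of |u| and |v|, hence bounded by any common bound F of both. *)
Lemma mean_bound (b u v w F : R) :
  1 <= b -> Rabs u <= F -> Rabs v <= F ->
  (b + 1) * w = b * u + v / b -> Rabs w <= F.
Proof.
  intros Hb Hu Hv Hw.
  assert (Hvb : Rabs (v / b) <= F).
  { unfold Rdiv. rewrite Rabs_mult, Rabs_inv, (Rabs_right b) by lra.
    apply Rmult_le_reg_r with b; [lra|].
    rewrite Rmult_assoc, Rinv_l, Rmult_1_r by lra.
    pose proof (Rabs_pos v). nra. }
  assert (Hsum : Rabs ((b + 1) * w) <= (b + 1) * F).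
  { rewrite Hw. eapply Rle_trans; [apply Rabs_triang|].
    rewrite Rabs_mult, (Rabs_right b) by lra. nra. }
  rewrite Rabs_mult, (Rabs_right (b + 1)) in Hsum by lra. nra.
Qed.

Lemma acoef_bound_low m k : (m <= 1)%nat -> Rabs (acoef m k) <= 1.
Proof.
  intros Hm. induction k as [|k IH].
  - rewrite acoef_0, Rabs_R1. lra.
  - apply (mean_bound (INR (m + 2 * k + 1)) (acoef m k) 0); auto.
    + apply (le_INR 1). lia.
    + rewrite Rabs_R0. lra.
    + rewrite <- S_INR. replace (S (m + 2 * k + 1)) with (m + 2 * k + 2)%nat by lia.
      rewrite acoef_rec_low by exact Hm. unfold Rdiv. ring.
Qed.

Lemma acoef_bound m k : Rabs (acoef m k) <= INR (fact m).
Proof.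
  revert k. induction m as [m IH] using (well_founded_induction Wf_nat.lt_wf).
  destruct m as [|[|m]]; intros k.
  - apply acoef_bound_low; lia.
  - apply acoef_bound_low; lia.
  - replace (S (S m)) with (m + 2)%nat by lia.
    assert (Hfact : INR (fact (m + 2)) = INR ((m + 2) * (m + 1)) * INR (fact m)).
    { rewrite <- mult_INR. f_equal. replace (m + 2)%nat with (S (S m)) by lia.
      replace (m + 1)%nat with (S m) by lia. simpl. lia. }
    induction k as [|k IHk].
    + rewrite acoef_0, Rabs_R1. apply (le_INR 1), lt_O_fact.
    + apply (mean_bound (INR (m + 2 + 2 * k + 1)) (acoef (m + 2) k)
               (INR ((m + 2) * (m + 1)) * acoef m (S k))); auto.
      * apply (le_INR 1). lia.
      * rewrite Rabs_mult, (Rabs_right (INR _)), Hfact by (apply Rle_ge, pos_INR).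
        apply Rmult_le_compat_l; [apply pos_INR|]. apply IH. lia.
      * rewrite <- S_INR. replace (S (m + 2 + 2 * k + 1)) with (m + 2 + 2 * k + 2)%nat by lia.
        rewrite acoef_rec_high. unfold Rdiv. ring.
Qed.

Lemma radius_of_bounded (a : nat -> R) (M x : R) :
  (forall n, Rabs (a n) <= M) -> Rabs x < 1 -> Rbar_lt (Rabs x) (CV_radius a).
Proof.
  intros Ha Hx.
  set (r := (Rabs x + 1) / 2).
  assert (Hr : 0 <= r < 1) by (unfold r; pose proof (Rabs_pos x); lra).
  assert (Hpow : forall n, 0 <= r ^ n <= 1).
  { induction n as [|n IHn]; simpl; nra. }
  apply Rbar_lt_le_trans with (Finite r); [simpl; unfold r; lra|].
  apply (proj1 (CV_radius_bounded a)). exists M. intros n.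
  rewrite Rabs_mult, (Rabs_right (r ^ n)) by (apply Rle_ge, Hpow).
  pose proof (Ha n). pose proof (Rabs_pos (a n)). pose proof (Hpow n). nra.
Qed.

Lemma is_pseries_lin (a b : nat -> R) (x la lb u v : R) :
  is_pseries a x la -> is_pseries b x lb ->
  is_pseries (fun n => u * a n + v * b n) x (u * la + v * lb).
Proof.
  rewrite !is_pseries_R. intros Ha Hb.
  pose proof (is_series_plus _ _ _ _ (is_series_scal u _ _ Ha) (is_series_scal v _ _ Hb)) as H.
  eapply is_series_ext; [|exact H]. intros n. simpl.
  unfold plus, scal; simpl. unfold mult; simpl. ring.
Qed.

Lemma is_pseries_xshift (a : nat -> R) (x l : R) :
  is_pseries a x l -> is_pseries (xshift a) x (x * l).
Proof. exact (is_pseries_incr_1 a x l). Qed.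

Lemma is_pseries_tail (a : nat -> R) (x l : R) :
  is_pseries a x l -> is_series (fun k => a (S k) * x ^ S k) (l - a O).
Proof.
  intros H. apply is_pseries_R in H.
  apply (is_series_incr_1 (fun n => a n * x ^ n)).
  match goal with |- is_series _ ?l' => replace l' with l; [exact H|] end.
  unfold plus; simpl. ring.
Qed.

(* A convergent power series whose coefficients vanish from index 1 on sums
   to its constant term; this turns coefficient recurrences into functional
   identities. *)
Lemma pseries_constant_term (a : nat -> R) (x l : R) :
  is_pseries a x l -> (forall n, a (S n) = 0) -> l = a O.
Proof.
  intros H Ha. apply is_pseries_tail, is_series_unique in H.
  rewrite (Series_ext _ (fun _ => 0 * 0)), Series_scal_l in H
    by (intros n; rewrite Ha; ring).
  lra.
Qed.

(* aser m x = sum_k acoef m k x^k, so that the series of the theorem is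
   aser m (t^2) - 1; daser is its derivative.  iser m is the series with
   coefficients acoef m k / (m + 1 + 2k), for which t^(m+1) iser m (t^2) is a
   primitive of t^m aser m (t^2). *)
Definition icoef (m k : nat) : R := acoef m k / INR (m + 1 + 2 * k).

Definition aser (m : nat) (x : R) : R := PSeries (acoef m) x.
Definition daser (m : nat) (x : R) : R := PSeries (PS_derive (acoef m)) x.
Definition iser (m : nat) (x : R) : R := PSeries (icoef m) x.
Definition diser (m : nat) (x : R) : R := PSeries (PS_derive (icoef m)) x.

Lemma radius_acoef m x : Rabs x < 1 -> Rbar_lt (Rabs x) (CV_radius (acoef m)).
Proof. apply radius_of_bounded with (M := INR (fact m)). apply acoef_bound. Qed.

Lemma radius_icoef m x : Rabs x < 1 -> Rbar_lt (Rabs x) (CV_radius (icoef m)).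
Proof.
  apply radius_of_bounded with (M := INR (fact m)). intros n. unfold icoef.
  assert (1 <= INR (m + 1 + 2 * n)) by (apply (le_INR 1); lia).
  unfold Rdiv. rewrite Rabs_mult, Rabs_inv, (Rabs_right (INR _)) by lra.
  apply Rmult_le_reg_r with (INR (m + 1 + 2 * n)); [lra|].
  rewrite Rmult_assoc, Rinv_l, Rmult_1_r by lra.
  pose proof (acoef_bound m n). pose proof (pos_INR (fact m)). nra.
Qed.

Lemma aser_correct m x : Rabs x < 1 -> is_pseries (acoef m) x (aser m x).
Proof. intros H. apply PSeries_correct, CV_radius_inside, radius_acoef, H. Qed.

Lemma daser_correct m x : Rabs x < 1 -> is_pseries (PS_derive (acoef m)) x (daser m x).
Proof. intros H. apply PSeries_correct, ex_pseries_derive, radius_acoef, H. Qed.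

Lemma iser_correct m x : Rabs x < 1 -> is_pseries (icoef m) x (iser m x).
Proof. intros H. apply PSeries_correct, CV_radius_inside, radius_icoef, H. Qed.

Lemma diser_correct m x : Rabs x < 1 -> is_pseries (PS_derive (icoef m)) x (diser m x).
Proof. intros H. apply PSeries_correct, ex_pseries_derive, radius_icoef, H. Qed.

(* The operator arising from differentiating sqrt(1 - t^2) t^m aser m (t^2)
   (see euler_form_asin below). *)
Definition euler_form (m : nat) (x : R) : R :=
  (1 - x) * (INR m * aser m x + 2 * x * daser m x) - x * aser m x.

Lemma euler_form_series m x : Rabs x < 1 ->
  is_pseries (fun n => INR (m + 2 * n) * acoef m n
                       - xshift (fun k => INR (m + 2 * k + 1) * acoef m k) n)
    x (euler_form m x).
Proof.
  intros Hx.
  pose proof (is_pseries_lin _ _ _ _ _ (INR m) 2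
                (aser_correct m x Hx) (is_pseries_xshift _ _ _ (daser_correct m x Hx))) as H1.
  pose proof (is_pseries_lin _ _ _ _ _ 1 (-(INR m + 1))
                H1 (is_pseries_xshift _ _ _ (aser_correct m x Hx))) as H2.
  pose proof (is_pseries_lin _ _ _ _ _ 1 (-2) H2
                (is_pseries_xshift _ _ _ (is_pseries_xshift _ _ _ (daser_correct m x Hx)))) as H3.
  unfold euler_form.
  match type of H3 with is_pseries _ _ ?l =>
    replace ((1 - x) * (INR m * aser m x + 2 * x * daser m x) - x * aser m x) with l by ring end.
  eapply is_pseries_ext; [|exact H3].
  (* The coefficient equations live in the normed-module carrier; they are
     restated in R so that ring applies. *)
  intros [|[|n]]; unfold PS_derive; cbn [xshift];
    match goal with |- ?a = ?b => change (@eq R a b) end;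
    rewrite ?plus_INR, ?mult_INR, ?S_INR; simpl (INR 0); ring.
Qed.

(* m = 0: the series aser 0 solves 2 (1 - x) f' = f, i.e. f = (1 - x)^(-1/2). *)
Lemma aser_0_ode x : Rabs x < 1 -> 2 * (1 - x) * daser 0 x - aser 0 x = 0.
Proof.
  intros Hx.
  pose proof (is_pseries_lin _ _ _ _ _ 2 (-2)
                (daser_correct 0 x Hx) (is_pseries_xshift _ _ _ (daser_correct 0 x Hx))) as H1.
  pose proof (is_pseries_lin _ _ _ _ _ 1 (-1) H1 (aser_correct 0 x Hx)) as H2.
  apply pseries_constant_term in H2.
  - unfold PS_derive in H2. cbn [xshift] in H2.
    pose proof (acoef_rec_low 0 0 ltac:(lia)) as Hrec.
    rewrite acoef_0 in H2, Hrec. simpl in H2, Hrec. lra.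
  - intros n. unfold PS_derive. cbn [xshift].
    pose proof (acoef_rec_low 0 (S n) ltac:(lia)) as Hrec.
    rewrite !plus_INR, !mult_INR, !S_INR in *. simpl (INR 0) in *. simpl (INR 2) in *.
    nra.
Qed.

Lemma euler_form_one x : Rabs x < 1 -> euler_form 1 x = 1.
Proof.
  intros Hx. rewrite (pseries_constant_term _ _ _ (euler_form_series 1 x Hx)).
  - cbn [xshift]. rewrite acoef_0. simpl. ring.
  - intros k. cbn [xshift].
    replace (1 + 2 * S k)%nat with (1 + 2 * k + 2)%nat by lia.
    rewrite acoef_rec_low by lia. ring.
Qed.

Lemma euler_form_high m x : Rabs x < 1 ->
  euler_form (m + 2) x = INR ((m + 2) * (m + 1)) * iser m x.
Proof.
  intros Hx.
  pose proof (is_pseries_lin _ _ _ _ _ 1 (- INR ((m + 2) * (m + 1)))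
                (euler_form_series (m + 2) x Hx) (iser_correct m x Hx)) as H.
  apply pseries_constant_term in H.
  - cbn [xshift] in H. unfold icoef in H. rewrite !acoef_0 in H.
    rewrite !mult_INR, !plus_INR in H. simpl in H.
    assert (0 < INR m + 1) by (pose proof (pos_INR m); lra).
    rewrite mult_INR, !plus_INR. simpl (INR 1). simpl (INR 2).
    match type of H with _ = ?c => replace c with 0 in H by (field; lra) end.
    lra.
  - intros k. cbn [xshift]. unfold icoef.
    replace (m + 2 + 2 * S k)%nat with (m + 2 + 2 * k + 2)%nat by lia.
    replace (m + 1 + 2 * S k)%nat with (m + 2 + 2 * k + 1)%nat by lia.
    rewrite acoef_rec_high. unfold Rdiv. ring.
Qed.

(* t^(m+1) iser m (t^2) differentiates to (m + 1) t^m aser m (t^2). *)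
Lemma iser_primitive m x : Rabs x < 1 ->
  INR (m + 1) * iser m x + 2 * x * diser m x = aser m x.
Proof.
  intros Hx.
  pose proof (is_pseries_lin _ _ _ _ _ (INR (m + 1)) 2
                (iser_correct m x Hx) (is_pseries_xshift _ _ _ (diser_correct m x Hx))) as H1.
  pose proof (is_pseries_lin _ _ _ _ _ 1 (-1) H1 (aser_correct m x Hx)) as H.
  assert (Hcoef : forall n, INR (m + 1) * icoef m n + 2 * xshift (PS_derive (icoef m)) n
                            = acoef m n).
  { intros [|n]; unfold icoef, PS_derive; cbn [xshift];
      rewrite ?plus_INR, ?mult_INR, ?S_INR; simpl (INR 0);
      pose proof (pos_INR m); [|pose proof (pos_INR n)]; field; lra. }
  apply pseries_constant_term in H.
  - rewrite Hcoef in H. lra.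
  - intros n. rewrite Hcoef. ring.
Qed.

Lemma eq_of_same_derivative (f g df : R -> R) :
  (forall s, Rabs s < 1 -> is_derive f s (df s)) ->
  (forall s, Rabs s < 1 -> is_derive g s (df s)) ->
  f 0 = g 0 -> forall t, Rabs t < 1 -> f t = g t.
Proof.
  intros Hf Hg H0 t Ht.
  assert (Hdiff : forall s, Rabs s < 1 -> is_derive (fun u => f u - g u) s 0).
  { intros s Hs. replace 0 with (minus (df s) (df s))
      by (unfold minus, plus, opp; simpl; ring).
    apply (is_derive_minus f g); auto. }
  assert (Hvar : Rabs (f t - g t - (f 0 - g 0)) <= 0 * Rabs (t - 0)).
  { apply (bounded_variation (fun u => f u - g u) (fun _ => 0)).
    intros s Hs. rewrite !Rminus_0_r in Hs. split.
    - apply Hdiff. lra.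
    - rewrite Rabs_R0. lra. }
  rewrite Rmult_0_l in Hvar.
  pose proof (Rabs_pos (f t - g t - (f 0 - g 0))).
  assert (f t - g t - (f 0 - g 0) = 0) by (apply Rabs_eq_0; lra).
  lra.
Qed.

Lemma sq_lt_1 s : Rabs s < 1 -> Rabs (s ^ 2) < 1.
Proof.
  intros H. rewrite Rabs_right by (apply Rle_ge, pow2_ge_0).
  rewrite <- pow2_abs. pose proof (Rabs_pos s). nra.
Qed.

Lemma one_minus_sq_pos s : Rabs s < 1 -> 0 < 1 - s ^ 2.
Proof.
  intros H. pose proof (sq_lt_1 s H) as Hsq.
  rewrite Rabs_right in Hsq by (apply Rle_ge, pow2_ge_0). lra.
Qed.

Lemma is_derive_asin s : Rabs s < 1 -> is_derive asin s (/ sqrt (1 - s ^ 2)).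
Proof.
  intros H. assert (Hs : -1 < s < 1) by (apply Rabs_def2 in H; lra).
  apply is_derive_Reals.
  pose proof (proj2_sig (derivable_pt_asin s Hs)) as Hd.
  change (derivable_pt_lim asin s (derive_pt asin s (derivable_pt_asin s Hs))) in Hd.
  rewrite derive_pt_asin in Hd.
  replace (s ^ 2) with (s²) by (unfold Rsqr; ring).
  rewrite <- (Rmult_1_l (/ _)). exact Hd.
Qed.

Lemma is_derive_asin_pow m s : Rabs s < 1 ->
  is_derive (fun u => asin u ^ m) s (INR m * / sqrt (1 - s ^ 2) * asin s ^ pred m).
Proof. intros H. apply (is_derive_pow asin m s), is_derive_asin, H. Qed.

Lemma is_derive_sqrt_one_minus_sq s : Rabs s < 1 ->
  is_derive (fun u => sqrt (1 - u ^ 2)) s (- s / sqrt (1 - s ^ 2)).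
Proof.
  intros Hs. pose proof (one_minus_sq_pos s Hs).
  auto_derive.
  - simpl in H. lra.
  - replace (1 + - (s * (s * 1))) with (1 - s ^ 2) by ring. field.
    apply Rgt_not_eq, sqrt_lt_R0; lra.
Qed.

Lemma is_derive_monomial_pseries (a : nat -> R) n s :
  (forall x, Rabs x < 1 -> Rbar_lt (Rabs x) (CV_radius a)) -> Rabs s < 1 ->
  is_derive (fun u => u ^ n * PSeries a (u ^ 2)) s
    (INR n * s ^ pred n * PSeries a (s ^ 2)
     + s ^ n * (2 * s * PSeries (PS_derive a) (s ^ 2))).
Proof.
  intros Hr Hs.
  assert (Hsq : is_derive (fun u : R => u ^ 2) s (2 * s))
    by (auto_derive; [exact I | ring]).
  pose proof (is_derive_comp (PSeries a) (fun u => u ^ 2) s _ _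
                (is_derive_PSeries a (s ^ 2) (Hr _ (sq_lt_1 s Hs))) Hsq) as Hcomp.
  pose proof (is_derive_pow (fun u => u) n s 1 (is_derive_id s)) as Hpow.
  pose proof (Derive.is_derive_mult _ _ s _ _ Hpow Hcomp) as H.
  simpl in H. rewrite Rmult_1_r in H. exact H.
Qed.

Definition asin_pow_expansion (m : nat) : Prop :=
  forall t, Rabs t < 1 -> sqrt (1 - t ^ 2) * (t ^ m * aser m (t ^ 2)) = asin t ^ m.

(* Integrating the expansion of (asin t)^m / sqrt(1 - t^2) term by term. *)
Lemma asin_pow_primitive m : asin_pow_expansion m ->
  forall t, Rabs t < 1 -> INR (m + 1) * (t ^ (m + 1) * iser m (t ^ 2)) = asin t ^ (m + 1).
Proof.
  intros IH.
  apply eq_of_same_derivative with (df := fun s => INR (m + 1) * / sqrt (1 - s ^ 2) * asin s ^ m).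
  - intros s Hs.
    pose proof (is_derive_scal _ s (INR (m + 1)) _
      (is_derive_monomial_pseries (icoef m) (m + 1) s (radius_icoef m) Hs)) as H.
    fold (iser m (s ^ 2)) (diser m (s ^ 2)) in H.
    replace (pred (m + 1)) with m in H by lia.
    match type of H with is_derive _ _ ?d =>
      replace (INR (m + 1) * / sqrt (1 - s ^ 2) * asin s ^ m) with d; [exact H|] end.
    rewrite <- (IH s Hs), <- (iser_primitive m (s ^ 2) (sq_lt_1 s Hs)).
    pose proof (sqrt_lt_R0 _ (one_minus_sq_pos s Hs)).
    rewrite pow_add. simpl (s ^ 1). field. lra.
  - intros s Hs. replace m with (pred (m + 1)) at 2 by lia.
    apply is_derive_asin_pow, Hs.
  - rewrite !pow_i, asin_0, pow_i by lia. ring.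
Qed.

Lemma euler_form_asin m s : Rabs s < 1 ->
  (forall j, (j < m)%nat -> asin_pow_expansion j) ->
  (1 - s ^ 2) * (INR m * s ^ pred m * aser m (s ^ 2) + s ^ m * (2 * s * daser m (s ^ 2)))
  - s * (s ^ m * aser m (s ^ 2)) = INR m * asin s ^ pred m.
Proof.
  intros Hs IH. pose proof (sq_lt_1 s Hs) as Hsq.
  destruct m as [|[|m]].
  - pose proof (aser_0_ode (s ^ 2) Hsq) as Hode. simpl pred. simpl INR.
    transitivity (s * (2 * (1 - s ^ 2) * daser 0 (s ^ 2) - aser 0 (s ^ 2))); [ring|].
    rewrite Hode. ring.
  - pose proof (euler_form_one (s ^ 2) Hsq) as Hone. unfold euler_form in Hone.
    simpl pred. simpl pow in *. simpl INR in *. lra.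
  - replace (S (S m)) with (m + 2)%nat by lia.
    replace (pred (m + 2)) with (m + 1)%nat by lia.
    transitivity (s ^ (m + 1) * euler_form (m + 2) (s ^ 2)).
    { unfold euler_form. rewrite !pow_add. simpl. ring. }
    rewrite euler_form_high, <- (asin_pow_primitive m (IH m ltac:(lia)) s Hs) by exact Hsq.
    rewrite !mult_INR, !plus_INR. simpl. ring.
Qed.

(* The main identity, by strong induction on m: both sides vanish or equal 1
   at 0 and have the same derivative. *)
Lemma asin_pow_expansion_holds m : asin_pow_expansion m.
Proof.
  induction m as [m IH] using (well_founded_induction Wf_nat.lt_wf).
  unfold asin_pow_expansion.
  apply (eq_of_same_derivative (fun u => sqrt (1 - u ^ 2) * (u ^ m * aser m (u ^ 2)))
           (fun u => asin u ^ m) (fun s => INR m * / sqrt (1 - s ^ 2) * asin s ^ pred m)).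
  - intros s Hs.
    pose proof (Derive.is_derive_mult _ _ s _ _ (is_derive_sqrt_one_minus_sq s Hs)
      (is_derive_monomial_pseries (acoef m) m s (radius_acoef m) Hs)) as H.
    fold (aser m (s ^ 2)) (daser m (s ^ 2)) in H.
    match type of H with is_derive _ _ ?d =>
      replace (INR m * / sqrt (1 - s ^ 2) * asin s ^ pred m) with d; [exact H|] end.
    pose proof (one_minus_sq_pos s Hs) as Hpos.
    pose proof (sqrt_lt_R0 _ Hpos). pose proof (sqrt_sqrt (1 - s ^ 2) ltac:(lra)) as Hsqrt.
    apply (Rmult_eq_reg_l (sqrt (1 - s ^ 2))); [|lra].
    transitivity (INR m * asin s ^ pred m); [|field; lra].
    rewrite <- (euler_form_asin m s Hs IH). fold (aser m (s ^ 2)).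
    set (q := sqrt (1 - s ^ 2)) in *. rewrite <- Hsqrt. field. lra.
  - intros s Hs. apply is_derive_asin_pow, Hs.
  - destruct m as [|m].
    + unfold aser. simpl. rewrite Rmult_0_l, PSeries_0, acoef_0, Rminus_0_r, sqrt_1. ring.
    + rewrite !pow_i, asin_0, pow_i by lia. ring.
Qed.

Theorem corollary2p1 (m : nat) (t : R) (ht : Rabs t < 1) :
  ex_series (fun k => cor_term m t (S k)) /\
  (asin t) ^ m / sqrt (1 - t ^ 2)
  = t ^ m * (1 + Series (fun k => cor_term m t (S k))).
Proof.
  (* The series of the statement is the tail of aser m (t^2). *)
  pose proof (is_pseries_tail _ _ _ (aser_correct m (t ^ 2) (sq_lt_1 t ht))) as Htail.
  rewrite acoef_0 in Htail.
  assert (Hser : is_series (fun k => cor_term m t (S k)) (aser m (t ^ 2) - 1)).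
  { eapply is_series_ext; [|exact Htail]. intros k. symmetry. apply cor_term_as_acoef. }
  split; [eexists; exact Hser|].
  rewrite (is_series_unique _ _ Hser), <- (asin_pow_expansion_holds m t ht).
  pose proof (sqrt_lt_R0 _ (one_minus_sq_pos t ht)).
  field. lra.
Qed.
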